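(* Let $L$ be a Leibniz algebra over $F$ and $(l,r,V)$ a representation of $L$. Let $A$ be a subspace of $L$ for which there exists an integer $n\ge1$ with $(r_A)^n=\{0\}$, and let $x\in n_L(A)$ be such that $r_x$ is nilpotent. Then there exists an integer $N\ge1$ with $(r_{A+Fx})^N=\{0\}$.
   Context: $F$ is an algebraically closed field of characteristic zero; all spaces are finite-dimensional. A (right) Leibniz algebra is a vector space $L$ with bilinear bracket satisfying $[x,[y,z]]=[[x,y],z]-[[x,z],y]$. A representation $(l,r,V)$ of $L$ is a vector space $V$ with linear maps $l,r:L\to\mathrm{End}_F(V)$ such that $r_{[x,y]}=r_yr_x-r_xr_y$, $l_{[x,y]}=r_yl_x-l_xr_y$, $l_{[x,y]}=r_yl_x+l_xl_y$ (products are compositions). For a subspace $B\subseteq L$, $r_B=\{r_b:b\in B\}$ and $(r_B)^p$ is the span of all compositions $r_{b_1}\cdots r_{b_p}$ with $b_i\in B$. $n_L(A)=\{y\in L:[y,a]\in A\text{ and }[a,y]\in A\ \forall a\in A\}$. *)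

From HB Require Import structures.
From mathcomp Require Import all_boot all_order all_algebra.
Set Implicit Arguments. Unset Strict Implicit. Unset Printing Implicit Defensive.
Import GRing.Theory.
Local Open Scope ring_scope.

Definition leibniz_bracket (F : fieldType) (L : vectType F) (br : L -> L -> L) :=
  [/\ forall (a : F) (x y z : L), br (a *: x + y) z = a *: br x z + br y z,
      forall (a : F) (x y z : L), br z (a *: x + y) = a *: br z x + br z y
    & forall x y z : L, br x (br y z) = br (br x y) z - br (br x z) y].

Definition leibniz_rep (F : fieldType) (L : vectType F) (br : L -> L -> L)
    (V : vectType F) (l r : {linear L -> 'End(V)}) :=
  [/\ forall x y : L, r (br x y) = (r y \o r x - r x \o r y)%VF,
      forall x y : L, l (br x y) = (r y \o l x - l x \o r y)%VF
    & forall x y : L, l (br x y) = (r y \o l x + l x \o l y)%VF].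

Definition rcomp (F : fieldType) (L V : vectType F) (r : L -> 'End(V))
    (bs : seq L) : 'End(V) :=
  foldr (fun b f => (r b \o f)%VF) \1%VF bs.

(* (r_B)^p = {0}: the span of all compositions r_{b_1}...r_{b_p}, b_i in B,
   is zero, i.e. each such composition is zero. *)
Definition rpow_zero (F : fieldType) (L V : vectType F) (r : L -> 'End(V))
    (B : {vspace L}) (p : nat) : Prop :=
  forall bs : p.-tuple L, all (fun b => b \in B) bs -> rcomp r bs = 0.

Definition normalizer (F : fieldType) (L : vectType F) (br : L -> L -> L)
    (A : {vspace L}) (y : L) : Prop :=
  forall a : L, a \in A -> br y a \in A /\ br a y \in A.

Definition nilpotentVF (F : fieldType) (V : vectType F) (f : 'End(V)) : Prop :=
  exists k : nat, iter k (fun g => (f \o g)%VF) \1%VF = 0.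

From HB Require Import structures.
From mathcomp Require Import all_boot all_order all_algebra.
Import GRing.Theory.
Local Open Scope ring_scope.
Set Implicit Arguments. Unset Strict Implicit. Unset Printing Implicit Defensive.

(* Let U_j = (r_A)^j V, a decreasing chain with U_n = 0. Since x normalizes A,
   r_x r_a = r_a' with a' = -[x,a] in A, so r_x maps every U_j into itself.
   With r_x^k = 0, the spaces W_(jk+s) = r_x^s U_j + U_(j+1) (0 <= s < k) form
   a chain starting at W_0 = V and reaching W_(nk) = U_n = 0, and r_y maps
   W_m into W_(m+1) for every y in A + Fx: the A-part of y lands in U_(j+1),
   the x-part raises s. Hence every product of nk such r_y vanishes. *)

Lemma pchar0_double_eq0 (F : fieldType) (V : lmodType F) (v : V) :
  [pchar F] =i pred0 -> v + v = 0 -> v = 0.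
Proof.
move=> hF; rewrite -mulr2n -scaler_nat => /eqP; rewrite scaler_eq0.
by rewrite ((pcharf0P F).1 hF 2) => /orP [//|/eqP].
Qed.

(* In [leibniz_rep] the operators \o and - share a level, so its first identity
   reads r_[p,q] = (r_q r_p - r_p) r_q; comparing it at q and at q + q gives
   r_q r_p r_q = 0 in characteristic 0. *)
Lemma leibniz_rep_comp_r (F : fieldType) (L V : vectType F) (br : L -> L -> L)
    (l r : {linear L -> 'End(V)}) :
  [pchar F] =i pred0 -> leibniz_bracket br -> leibniz_rep br l r ->
  forall p q : L, (r p \o r q = - r (br p q))%VF.
Proof.
move=> hF [_ brD _] [rbr _ _] p q; apply/lfunP => w.
have brpqq : br p (q + q) = br p q + br p q by rewrite -[q in q + _]scale1r brD scale1r.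
have rbrw q' : r (br p q') w = r q' (r p (r q' w)) - r p (r q' w).
  by rewrite rbr !(comp_lfunE, add_lfunE, opp_lfunE).
set P := r q (r p (r q w)); set Q := r p (r q w).
have eP : P + P = 0.
  have := rbrw (q + q); rewrite brpqq !linearD /= !add_lfunE !linearD /= rbrw -/P -/Q.
  move/eqP; rewrite eq_sym -subr_eq0 => /eqP <-.
  by rewrite [P - Q + _]addrACA -[in RHS](addrA (P + P)) addrK.
by rewrite comp_lfunE opp_lfunE rbrw -/P -/Q (pchar0_double_eq0 hF eP) sub0r opprK.
Qed.

Lemma rcomp_rcons (F : fieldType) (L V : vectType F) (r : L -> 'End(V))
    (bs : seq L) (b : L) (v : V) :
  rcomp r (rcons bs b) v = rcomp r bs (r b v).
Proof. by elim: bs => [|c bs IH] /=; rewrite ?comp_lfunE ?id_lfunE // IH. Qed.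

Definition lfun_pow (F : fieldType) (V : vectType F) (f : 'End(V)) (s : nat) :=
  iter s (fun g => (f \o g)%VF) \1%VF.

Lemma lfun_pow0 (F : fieldType) (V : vectType F) (f : 'End(V)) :
  lfun_pow f 0 = \1%VF.
Proof. by []. Qed.

Lemma lfun_powS (F : fieldType) (V : vectType F) (f : 'End(V)) (s : nat) (u : V) :
  lfun_pow f s.+1 u = f (lfun_pow f s u).
Proof. by rewrite /lfun_pow /= comp_lfunE. Qed.

Section RightPowerSpaces.

Variables (F : fieldType) (L V : vectType F) (r : {linear L -> 'End(V)}).
Variable A : {vspace L}.

Fixpoint rpow_space (j : nat) : {vspace V} :=
  if j is j'.+1 then (\sum_(i < \dim A) (r (vbasis A)`_i @: rpow_space j'))%VS
  else fullv.

Lemma vbasis_nth_mem (i : 'I_(\dim A)) : (vbasis A)`_i \in A.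
Proof. by apply: vbasis_mem; rewrite mem_nth // size_tuple. Qed.

Lemma memv_rpow_spaceS (j : nat) (a : L) (u : V) :
  a \in A -> u \in rpow_space j -> r a u \in rpow_space j.+1.
Proof.
move=> aA uU; rewrite [a](coord_vbasis aA) raddf_sum /= sum_lfunE.
apply: memv_suml => i _; rewrite linearZ /= scale_lfunE; apply: memvZ.
by apply: (subvP (sumv_sup i isT (subvv _))); apply: memv_img.
Qed.

Lemma rpow_spaceS_sub (j : nat) : (rpow_space j.+1 <= rpow_space j)%VS.
Proof.
elim: j => [|j IH]; first exact: subvf.
apply/subv_sumP => i _; apply: subv_trans (limgS _ IH) _.
exact: (sumv_sup i).
Qed.

Lemma rpow_space_eq0 (n : nat) : rpow_zero r A n -> rpow_space n = 0%VS.
Proof.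
move=> hA.
have rcomp0 j bs u : all (fun b => b \in A) bs -> (j + size bs = n)%N ->
    u \in rpow_space j -> rcomp r bs u = 0.
  elim: j bs u => [|j IH] bs u Abs sz_bs.
    by rewrite (hA (Tuple (introT eqP sz_bs)) Abs) zero_lfunE.
  move=> /memv_sumP [us Uus ->]; rewrite raddf_sum; apply: big1 => i _.
  have /memv_imgP [w wU ->] := Uus i isT.
  transitivity (rcomp r (rcons bs (vbasis A)`_i) w); first by rewrite rcomp_rcons.
  apply: IH wU; first by rewrite all_rcons vbasis_nth_mem.
  by rewrite size_rcons addnS -addSn.
apply/eqP; rewrite -subv0; apply/subvP => u uU.
by rewrite memv0 -[u]id_lfunE (rcomp0 n [::]) ?addn0.
Qed.

Variable f : 'End(V).
Hypothesis f_comp_rA : forall a, a \in A -> exists2 a', a' \in A & (f \o r a = r a')%VF.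

Lemma rpow_space_stable (j : nat) (u : V) :
  u \in rpow_space j -> f u \in rpow_space j.
Proof.
case: j => [|j]; first by move=> _; exact: memvf.
move=> /memv_sumP [us Uus ->]; rewrite raddf_sum; apply: memv_suml => i _.
have /memv_imgP [w wU ->] := Uus i isT.
have [a' a'A fa] := f_comp_rA (vbasis_nth_mem i).
by move: (memv_rpow_spaceS a'A wU); rewrite -fa comp_lfunE.
Qed.

Lemma rpow_space_stable_pow (j s : nat) (u : V) :
  u \in rpow_space j -> lfun_pow f s u \in rpow_space j.
Proof.
move=> uU; elim: s => [|s IH]; first by rewrite lfun_pow0 id_lfunE.
by rewrite lfun_powS rpow_space_stable.
Qed.

End RightPowerSpaces.

Section NilpotentExtension.

Variables (F : fieldType) (L V : vectType F) (r : {linear L -> 'End(V)}).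
Variables (A : {vspace L}) (x : L).
Hypothesis rx_comp_rA :
  forall a, a \in A -> exists2 a', a' \in A & (r x \o r a = r a')%VF.

Local Notation U := (rpow_space r A).
Local Notation rx_pow := (lfun_pow (r x)).

Lemma memv_rx_step (y : L) (j s : nat) (v : V) : y \in (A + <[x]>)%VS ->
    v \in (rx_pow s @: U j + U j.+1)%VS -> r y v \in (rx_pow s.+1 @: U j + U j.+1)%VS.
Proof.
move=> /memv_addP [a aA [_ /vlineP [c ->] ->]].
move=> /memv_addP [_ /memv_imgP [u uU ->] [w wU ->]].
have -> : r (a + c *: x) (rx_pow s u + w) =
    c *: rx_pow s.+1 u + (r a (rx_pow s u) + r a w + c *: r x w).
  rewrite lfun_powS [r (a + _)]linearD [r (_ *: x)]linearZ /= add_lfunE scale_lfunE.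
  by rewrite !linearD /= addrCA.
apply: memvD; first by apply/memvZ/(subvP (addvSl _ _))/memv_img.
apply/(subvP (addvSr _ _))/memvD; last exact/memvZ/rpow_space_stable.
apply: memvD; apply: memv_rpow_spaceS aA _; last exact: (subvP (rpow_spaceS_sub _ _ _)).
exact: rpow_space_stable_pow.
Qed.

Variable k : nat.
Hypotheses (k_gt0 : (0 < k)%N) (rx_pow_k : rx_pow k = 0).

Definition rx_flag (m : nat) : {vspace V} :=
  (rx_pow (m %% k) @: U (m %/ k) + U (m %/ k).+1)%VS.

Lemma memv_rx_flagS (y : L) (m : nat) (v : V) :
  y \in (A + <[x]>)%VS -> v \in rx_flag m -> r y v \in rx_flag m.+1.
Proof.
move=> Ay /(memv_rx_step Ay); rewrite /rx_flag modnS (divnS _ k_gt0).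
case: ifP => [dvd_k_m1 | _]; last by rewrite add0n.
have -> : (m %% k).+1 = k.
  by apply/eqP; rewrite eqn_leq ltn_pmod // dvdn_leq // /dvdn -addn1 modnDml addn1.
rewrite rx_pow_k lim0g add0v add1n lfun_pow0 lim1g => Uv.
exact: (subvP (addvSl _ _)).
Qed.

Lemma rcomp_rx_flag (bs : seq L) (m : nat) (v : V) :
  all (fun b => b \in (A + <[x]>)%VS) bs -> v \in rx_flag m ->
  rcomp r bs v \in rx_flag (m + size bs).
Proof.
elim: bs => [|b bs IH] /=; first by move=> _ Fv; rewrite id_lfunE addn0.
move=> /andP [Ab Abs] Fv; rewrite comp_lfunE addnS.
exact: memv_rx_flagS (IH Abs Fv).
Qed.

Lemma rx_flag0 : rx_flag 0 = fullv.
Proof.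
apply/eqP; rewrite eqEsubv subvf /rx_flag mod0n div0n lfun_pow0 lim1g.
exact: addvSl.
Qed.

Lemma rx_flag_eq0 (n : nat) : rpow_zero r A n -> rx_flag (n * k) = 0%VS.
Proof.
move=> /rpow_space_eq0 Un0.
rewrite /rx_flag modnMl mulnK // lfun_pow0 lim1g Un0 add0v.
by apply/eqP; rewrite -subv0 -Un0 rpow_spaceS_sub.
Qed.

Lemma rpow_zero_addv_line (n : nat) :
  rpow_zero r A n -> rpow_zero r (A + <[x]>)%VS (n * k).
Proof.
move=> hA bs Abs; apply/lfunP => v; rewrite zero_lfunE.
have := @rcomp_rx_flag bs 0 v Abs.
by rewrite rx_flag0 memvf size_tuple add0n rx_flag_eq0 // memv0 => /(_ isT) /eqP.
Qed.

End NilpotentExtension.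

Theorem lemma4p1 (F : closedFieldType) (hF : [pchar F] =i pred0)
  (L : vectType F) (br : L -> L -> L) (hL : leibniz_bracket br)
  (V : vectType F) (l r : {linear L -> 'End(V)}) (hrep : leibniz_rep br l r)
  (A : {vspace L}) (n : nat) (hn : (0 < n)%N) (hA : rpow_zero r A n)
  (x : L) (hx : normalizer br A x) (hrx : nilpotentVF (r x)) :
  exists N : nat, (0 < N)%N /\ rpow_zero r (A + <[x]>)%VS N.
Proof.
have rx_comp_rA a : a \in A -> exists2 a', a' \in A & (r x \o r a = r a')%VF.
  move=> aA; exists (- br x a); first by rewrite memvN; case: (hx a aA).
  by rewrite (leibniz_rep_comp_r hF hL hrep) linearN.
have [k rx_pow_k] : exists k, lfun_pow (r x) k = 0 := hrx.
have rx_pow_kS : lfun_pow (r x) k.+1 = 0.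
  by rewrite -[LHS]/(r x \o lfun_pow (r x) k)%VF rx_pow_k comp_lfun0r.
exists (n * k.+1)%N; split; first by rewrite muln_gt0 hn.
exact: rpow_zero_addv_line.
Qed.
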